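(* Let $\mathscr{P}=\{X_t\}_{t\ge1}$ be a stationary ergodic stochastic process over a finite alphabet $\Sigma$, and let $Q$ be its set of causal states (excluding the class of zero-probability sequences). For $q,q'\in Q$ put $\pi_{q,q'}=\sum_{\sigma\in\Sigma:\,q\sigma=q'}\phi_q(\sigma)$. Then for every $q'\in Q$ and every $d\in\mathbb{N}^+$, $$p_d(q')=\sum_{q\in Q}\pi_{q,q'}\,p_{d-1}(q).$$ Furthermore, $\pi_{q,q'}=0$ whenever $q$ is persistent and $q'$ is transient.
   Context: For $x=\sigma_1\cdots\sigma_n\in\Sigma^\star$ (finite sequences, $\lambda$ the empty sequence) write $Pr(x)=Pr(X_1\cdots X_n=\sigma_1\cdots\sigma_n)$, with $Pr(\lambda)=1$. For $x$ with $Pr(x)>0$, $\mu_x$ is the probability measure on $\Sigma^\omega$ (with the $\sigma$-field generated by cylinders $y\Sigma^\omega$) determined by $\mu_x(y\Sigma^\omega)=Pr(xy)/Pr(x)$. Sequences $x,y$ are equivalent ($x\sim y$) iff $Pr(x)=Pr(y)=0$ or $\mu_x=\mu_y$; this equivalence is right-invariant ($x\sim y\Rightarrow xz\sim yz$). The equivalence classes $[x]$ with $Pr(x)>0$ are the causal states; $\mu_{[x]}:=\mu_x$. The symbolic derivative is $\phi_q(\sigma)=\mu_q(\sigma\Sigma^\omega)$. The notation $q\sigma=q'$ means $[x\sigma]=q'$ for all $x\in q$ (well-defined when $\phi_q(\sigma)>0$). For $q\in Q$ and $d\in\mathbb{N}$, $p_d(q)=\sum_{x\in\Sigma^d:\,[x]=q}Pr(x)$.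 A causal state $q$ is persistent if $\liminf_{d\to\infty}p_d(q)>0$ and transient otherwise. *)

From HB Require Import structures.
From mathcomp Require Import all_boot all_order all_algebra.
From mathcomp Require Import all_classical all_reals all_analysis.

Set Implicit Arguments.
Unset Strict Implicit.
Unset Printing Implicit Defensive.

Import Order.TTheory GRing.Theory Num.Theory.
Local Open Scope classical_set_scope.
Local Open Scope ring_scope.

(** One-sided infinite sequences over Sigma: w 0 = X_1, w 1 = X_2, ...
    (the point s0 only serves to make the type a pointedType) *)
Definition palph (Sigma : finType) (s0 : Sigma) : Type := Sigma.
HB.instance Definition _ (Sigma : finType) (s0 : Sigma) :=
  Finite.on (palph s0).
HB.instance Definition _ (Sigma : finType) (s0 : Sigma) :=
  isPointed.Build (palph s0) s0.
Definition seqspace (Sigma : finType) (s0 : Sigma) := nat -> palph s0.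

Definition cyl (Sigma : finType) (s0 : Sigma) (x : seq Sigma) : set (seqspace s0) :=
  [set w | map w (iota 0 (size x)) = x].

Definition Omega (Sigma : finType) (s0 : Sigma) := g_sigma_algebraType (range (@cyl Sigma s0)).

Definition shift (Sigma : finType) (s0 : Sigma) (w : Omega s0) : Omega s0 :=
  fun n => w n.+1.

Section CausalStates.
Variables (R : realType) (Sigma : finType) (s0 : Sigma).
Variable P : probability (Omega s0) R.

Definition stationary := forall A : set (Omega s0), measurable A ->
  P ((@shift Sigma s0) @^-1` A) = P A.
Definition ergodic := forall A : set (Omega s0), measurable A ->
  (@shift Sigma s0) @^-1` A = A -> P A = 0%E \/ P A = 1%E.

Definition Pr (x : seq Sigma) : R := fine (P (@cyl Sigma s0 x)).

(** mu_x, described by its values on the cylinders y Sigma^omega *)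
Definition mu (x : seq Sigma) : seq Sigma -> R := fun y => Pr (x ++ y) / Pr x.

Definition equiv (x y : seq Sigma) : Prop :=
  (Pr x = 0 /\ Pr y = 0) \/ (0 < Pr x /\ 0 < Pr y /\ mu x = mu y).

Definition cls (x : seq Sigma) : set (seq Sigma) := [set y | equiv x y].

Definition causal : set (set (seq Sigma)) := [set cls x | x in [set x | 0 < Pr x]].

Definition mu_state (q : set (seq Sigma)) : seq Sigma -> R := mu (xget [::] q).
Definition phi (q : set (seq Sigma)) (s : Sigma) : R := mu_state q [:: s].

(** q s = q' : [x s] = q' for all x in q *)
Definition trans (q : set (seq Sigma)) (s : Sigma) (q' : set (seq Sigma)) : Prop :=
  forall x, q x -> cls (rcons x s) = q'.

Definition pi_tr (q q' : set (seq Sigma)) : R :=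
  \sum_(s : Sigma | `[< trans q s q' >]) phi q s.

Definition pd (d : nat) (q : set (seq Sigma)) : R :=
  \sum_(x : d.-tuple Sigma | `[< cls x = q >]) Pr x.

Definition persistent (q : set (seq Sigma)) : Prop :=
  0 < limn_inf (fun d => pd d q).
Definition transient (q : set (seq Sigma)) : Prop := ~ persistent q.
End CausalStates.

From Pilot Require Import Defs.
From HB Require Import structures.
From mathcomp Require Import all_boot all_order all_algebra.
From mathcomp Require Import all_classical all_reals all_analysis.
Import Order.TTheory GRing.Theory Num.Theory.
Local Open Scope classical_set_scope.
Local Open Scope ring_scope.

(* Splitting a word of length n+1 as y s, the mass p_{n+1}(q') collects the
   Pr(y s) with [y s] = q'.  Right invariance of ~ makes [y s] depend only on
   [y], and Pr(y s) = phi_[y](s) Pr(y); grouping the words y by their class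
   gives p_{n+1}(q') = sum_q pi_{q,q'} p_n(q), where only q = [y] contributes
   for each y.  Hence pi_{q,q'} p_n(q) <= p_{n+1}(q'), and passing to the
   liminf, pi_{q,q'} > 0 with q persistent forces q' to be persistent. *)

Lemma big_tuple_rcons (V : nmodType) (T : finType) n (F : seq T -> V) :
  \sum_(x : n.+1.-tuple T) F x =
  \sum_(y : n.-tuple T) \sum_(t : T) F (rcons y t).
Proof.
rewrite pair_big /=.
pose h (p : n.-tuple T * T) : n.+1.-tuple T := [tuple of rcons p.1 p.2].
have rcons_belast (x : n.+1.-tuple T) :
    val x = rcons (belast (thead x) (behead x)) (last (thead x) (behead x)).
  by rewrite -lastI {1}(tuple_eta x).
pose g (x : n.+1.-tuple T) : n.-tuple T * T :=
  ([tuple of belast (thead x) (behead x)], last (thead x) (behead x)).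
rewrite (reindex h) //; exists g => [[y t] _|x _]; last first.
  by apply/val_inj; rewrite /= -rcons_belast.
have /rcons_inj[yE tE] := esym (rcons_belast (h (y, t))).
by rewrite /g tE; congr pair; apply/val_inj; rewrite /= yE.
Qed.

Lemma esum_asbool_eq (R : realType) (T : choiceType) (D : set T) (t : T)
    (f : T -> \bar R) : (0 <= f t)%E -> D t ->
  \esum_(x in D) (if `[< t = x >] then f x else 0%E) = f t.
Proof.
move=> ft0 Dt.
transitivity (\esum_(x in [set t]) (if `[< t = x >] then f x else 0%E)).
  rewrite esum_mkcond [RHS]esum_mkcond; apply: eq_esum => x _.
  case: (asboolP (t = x)) => [<-|_]; first by rewrite !mem_set.
  by case: (_ \in _); case: (_ \in _).
by rewrite esum_set1 asboolT.
Qed.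

Lemma le_limn_inf_scale_shift (R : realType) (a : R) (u v : R^nat) :
  has_lbound (range u) -> has_ubound (range u) ->
  has_lbound (range v) -> has_ubound (range v) ->
  0 <= a -> (forall n, a * u n <= v n.+1) -> a * limn_inf u <= limn_inf v.
Proof.
move=> lbu ubu lbv ubv a_ge0 uv.
have infs_le n : a * infs u n <= infs v n.+1.
  apply: lb_le_inf; first by exists (v n.+1); exists n.+1 => /=.
  move=> _ [[|k] nk <-] //; apply: le_trans (uv k).
  by rewrite ler_wpM2l // ge_inf //; [exact: has_lbound_sdrop | exists k].
have cu : cvgn (infs u) := cvgP _ (cvg_infs_sup ubu lbu).
have cv : cvgn (infs v) := cvgP _ (cvg_infs_sup ubv lbv).
rewrite /limn_inf; apply: (cvgr_to_le (cvgMl_tmp (a := a) cu)).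
apply: nearW => n; apply: le_trans (infs_le n) _.
exact: nondecreasing_cvgn_le (nondecreasing_infs lbv) cv n.+1.
Qed.

Section CausalStates.
Variables (R : realType) (Sigma : finType) (s0 : Sigma).
Variable P : probability (Omega s0) R.

Lemma measurable_cyl x : measurable (@cyl Sigma s0 x : set (Omega s0)).
Proof. by apply: sub_gen_smallest; exists x. Qed.

Lemma EFin_Pr x : (Pr P x)%:E = P (@cyl Sigma s0 x).
Proof. by rewrite /Pr fineK // fin_num_measure //; exact: measurable_cyl. Qed.

Lemma Pr_ge0 x : 0 <= Pr P x.
Proof. by rewrite /Pr fine_ge0. Qed.

Lemma Pr_nil : Pr P [::] = 1.
Proof.
rewrite /Pr (_ : @cyl Sigma s0 [::] = setT) ?probability_setT //.
by apply/seteqP; split.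
Qed.

Lemma cyl_rcons y s :
  @cyl Sigma s0 (rcons y s) = @cyl Sigma s0 y `&` [set w | w (size y) = s].
Proof.
apply/seteqP; split => w.
all: rewrite /cyl /= size_rcons -addn1 iotaD add0n cats1 map_rcons.
  by move/eqP; rewrite eqseq_rcons => /andP[/eqP-> /eqP->].
by case=> -> ->.
Qed.

Lemma Pr_rcons_le y s : Pr P (rcons y s) <= Pr P y.
Proof.
rewrite -lee_fin !EFin_Pr le_measure ?inE ?cyl_rcons //; try exact: measurable_cyl.
by rewrite -cyl_rcons; exact: measurable_cyl.
Qed.

Lemma Pr_rcons_eq0 y s : Pr P y = 0 -> Pr P (rcons y s) = 0.
Proof. by move=> y0; apply/eqP; rewrite eq_le Pr_ge0 andbT -y0 Pr_rcons_le. Qed.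

Lemma sum_Pr_rcons y : \sum_(s : Sigma) Pr P (rcons y s) = Pr P y.
Proof.
apply/EFin_inj; rewrite -sumEFin EFin_Pr.
have -> : @cyl Sigma s0 y = \bigcup_(s in [set: Sigma]) @cyl Sigma s0 (rcons y s).
  apply/seteqP; split => [w yw|w [s _]]; last by rewrite cyl_rcons => -[].
  by exists (w (size y)) => //; rewrite cyl_rcons.
rewrite measure_fin_bigcup //; last 3 first.
- exact: finite_finset.
- by move=> s t _ _ [w]; rewrite !cyl_rcons => -[[_ <-] [_ <-]].
- by move=> s _; exact: measurable_cyl.
have -> : [set: Sigma] = [set` enum Sigma].
  by apply/seteqP; split=> s //= _; rewrite mem_enum.
rewrite -fsbig_seq ?enum_uniq // big_enum /=.
by apply: eq_bigr => s _; rewrite EFin_Pr.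
Qed.

Lemma sum_Pr_tuple n : \sum_(x : n.-tuple Sigma) Pr P x = 1.
Proof.
elim: n => [|n IHn].
  by rewrite (big_pred1 [tuple]) ?Pr_nil // => x; rewrite [x]tuple0 /= eqxx.
by rewrite big_tuple_rcons -{}IHn; apply: eq_bigr => y _; rewrite sum_Pr_rcons.
Qed.

Lemma Pr_eq0_or_gt0 x : Pr P x = 0 \/ 0 < Pr P x.
Proof. by have := Pr_ge0 x; rewrite le0r => /orP[/eqP|]; [left|right]. Qed.

Lemma equiv_refl x : Defs.equiv P x x.
Proof. by case: (Pr_eq0_or_gt0 x); [left|right]. Qed.

Lemma equiv_sym x y : Defs.equiv P x y -> Defs.equiv P y x.
Proof. by case=> [[? ?]|[? [? ?]]]; [left|right]. Qed.

Lemma equiv_trans x y z :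
  Defs.equiv P x y -> Defs.equiv P y z -> Defs.equiv P x z.
Proof.
case=> [[x0 y0]|[x_gt0 [y_gt0 xy]]] [[y0' z0]|[y_gt0' [z_gt0 yz]]].
- by left.
- by move: y_gt0'; rewrite y0 ltxx.
- by move: y_gt0; rewrite y0' ltxx.
- by right; rewrite xy yz.
Qed.

Lemma cls_eq x y : Defs.equiv P x y -> cls P x = cls P y.
Proof.
move=> xy; apply/seteqP; split => z; first exact/equiv_trans/equiv_sym.
exact: equiv_trans.
Qed.

Lemma mu_rcons y s w : 0 < Pr P (rcons y s) ->
  mu P (rcons y s) w = mu P y (s :: w) / mu P y [:: s].
Proof.
move=> ys_gt0; have y_gt0 := lt_le_trans ys_gt0 (Pr_rcons_le y s).
by rewrite /mu cats1 -cat_rcons invf_div mulrA divfK ?gt_eqF.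
Qed.

Lemma equiv_rcons y z s :
  Defs.equiv P y z -> Defs.equiv P (rcons y s) (rcons z s).
Proof.
case=> [[y0 z0]|[y_gt0 [z_gt0 yz]]]; first by left; rewrite !Pr_rcons_eq0.
have : Pr P (rcons y s) / Pr P y = Pr P (rcons z s) / Pr P z.
  by rewrite -!cats1; exact: (congr1 (fun f => f [:: s]) yz).
have [ys0|ys_gt0] := Pr_eq0_or_gt0 (rcons y s).
all: have [zs0|zs_gt0] := Pr_eq0_or_gt0 (rcons z s).
- by left.
- by rewrite ys0 mul0r => /esym/eqP; rewrite mulf_eq0 invr_eq0 !gt_eqF.
- by rewrite zs0 mul0r => /eqP; rewrite mulf_eq0 invr_eq0 !gt_eqF.
- by right; split => //; split => //; apply/funext => w; rewrite !mu_rcons // yz.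
Qed.

Lemma trans_clsE y s q' : trans P (cls P y) s q' <-> cls P (rcons y s) = q'.
Proof.
split => [|<- x yx]; first by apply; exact: equiv_refl.
exact/esym/cls_eq/equiv_rcons.
Qed.

Lemma phi_cls y s :
  0 < Pr P y -> phi P (cls P y) s = Pr P (rcons y s) / Pr P y.
Proof.
move=> y_gt0; rewrite /phi /mu_state.
have : cls P y (xget [::] (cls P y)) by apply: xgetI (equiv_refl y).
case=> [[y0 _]|[_ [_ <-]]]; last by rewrite /mu cats1.
by move: y_gt0; rewrite y0 ltxx.
Qed.

Lemma phi_ge0 q s : 0 <= phi P q s.
Proof. by rewrite /phi /mu_state /mu divr_ge0 // Pr_ge0. Qed.

Lemma pi_tr_ge0 q q' : 0 <= pi_tr P q q'.
Proof. by rewrite /pi_tr sumr_ge0 // => s _; exact: phi_ge0. Qed.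

Lemma pi_tr_cls_mulPr y q' : pi_tr P (cls P y) q' * Pr P y =
  \sum_(s : Sigma | `[< cls P (rcons y s) = q' >]) Pr P (rcons y s).
Proof.
have [y0|y_gt0] := Pr_eq0_or_gt0 y.
  by rewrite y0 mulr0 big1 // => s _; exact: Pr_rcons_eq0.
rewrite /pi_tr mulr_suml; apply: eq_big => s.
  exact/asbool_equiv_eq/trans_clsE.
by rewrite phi_cls // divfK // gt_eqF.
Qed.

Lemma pd_succ n q' :
  pd P n.+1 q' = \sum_(y : n.-tuple Sigma) pi_tr P (cls P y) q' * Pr P y.
Proof.
rewrite /pd big_mkcond.
rewrite (@big_tuple_rcons _ _ n
  (fun x => if `[< cls P x = q' >] then Pr P x else 0)).
by apply: eq_bigr => y _; rewrite pi_tr_cls_mulPr [RHS]big_mkcond.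
Qed.

Lemma pd_ge0 n q : 0 <= pd P n q.
Proof. by rewrite /pd sumr_ge0 // => x _; exact: Pr_ge0. Qed.

Lemma pd_le1 n q : pd P n q <= 1.
Proof.
rewrite -(sum_Pr_tuple n) /pd.
rewrite [leRHS](bigID (fun x : n.-tuple Sigma => `[< cls P x = q >])) /=.
by rewrite lerDl sumr_ge0 // => x _; exact: Pr_ge0.
Qed.

Lemma pd_recurrence n q' :
  ((pd P n.+1 q')%:E = \esum_(q in causal P) (pi_tr P q q' * pd P n q)%:E)%E.
Proof.
under eq_esum => q _ do rewrite /pd mulr_sumr big_mkcond -sumEFin.
rewrite esum_sum; last first.
  move=> q y _ _; case: ifP => // _.
  by rewrite lee_fin mulr_ge0 ?pi_tr_ge0 ?Pr_ge0.
rewrite pd_succ -sumEFin; apply: eq_bigr => y _.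
under eq_esum => q _ do rewrite (fun_if EFin).
have [y0|y_gt0] := Pr_eq0_or_gt0 y.
  by rewrite y0 mulr0 esum1 // => q _; case: ifP; rewrite ?y0 ?mulr0.
apply/esym/(@esum_asbool_eq _ _ _ _ (fun q => (pi_tr P q q' * Pr P y)%:E)).
  by rewrite lee_fin mulr_ge0 ?pi_tr_ge0 ?Pr_ge0.
by exists y.
Qed.

Lemma pi_tr_mul_pd_le n q q' : pi_tr P q q' * pd P n q <= pd P n.+1 q'.
Proof.
rewrite pd_succ /pd mulr_sumr.
rewrite [leRHS](bigID (fun y : n.-tuple Sigma => `[< cls P y = q >])) /=.
rewrite ler_wpDr ?sumr_ge0 // => [y _|].
  by rewrite mulr_ge0 ?pi_tr_ge0 ?Pr_ge0.
by apply: ler_sum => y /asboolP ->.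
Qed.

Lemma pi_tr_persistent_transient q q' :
  persistent P q -> transient P q' -> pi_tr P q q' = 0.
Proof.
move=> q_pers q'_trans; apply/eqP; rewrite eq_le pi_tr_ge0 andbT leNgt.
apply/negP => pi_gt0; apply: q'_trans; rewrite /persistent.
have lb q'' : has_lbound (range (pd P ^~ q'')).
  by exists 0 => _ [d _ <-]; exact: pd_ge0.
have ub q'' : has_ubound (range (pd P ^~ q'')).
  by exists 1 => _ [d _ <-]; exact: pd_le1.
apply: lt_le_trans (mulr_gt0 pi_gt0 q_pers) _.
exact: le_limn_inf_scale_shift (ltW pi_gt0) (fun n => pi_tr_mul_pd_le n q q').
Qed.

End CausalStates.

Theorem mainTheorem2 (R : realType) (Sigma : finType) (s0 : Sigma)
  (P : probability (Omega s0) R) :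
  stationary P -> ergodic P ->
  (forall q' : set (seq Sigma), causal P q' -> forall d : nat, (0 < d)%N ->
     ((pd P d q')%:E = \esum_(q in causal P) (pi_tr P q q' * pd P d.-1 q)%:E)%E) /\
  (forall q q' : set (seq Sigma), causal P q -> causal P q' ->
     persistent P q -> transient P q' -> pi_tr P q q' = 0).
Proof.
move=> _ _; split=> [q' _ [//|n] _ | q q' _ _]; first exact: pd_recurrence.
exact: pi_tr_persistent_transient.
Qed.
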